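(* Let $V$ be a finite-dimensional real $\mathbb Z/3$-representation and $n\ge0$ an integer. Then $V$ has a $\mathbb Z/3$-invariant basis up to sign if and only if $V\oplus n\mathbf 3$ does.
   Context: $\mathbf 3$ denotes the regular representation of $\mathbb Z/3$ ($\mathbb R^3$ with cyclic permutation of coordinates), $n\mathbf 3$ the direct sum of $n$ copies. A basis is invariant up to sign if every group element maps each basis element to plus or minus a basis element. *)

From HB Require Import structures.
From mathcomp Require Import all_boot all_order all_algebra.
From mathcomp Require Import reals.
Set Implicit Arguments. Unset Strict Implicit. Unset Printing Implicit Defensive.
Import Order.TTheory GRing.Theory Num.Theory.
Local Open Scope ring_scope.

(* A finite-dimensional real Z/3-representation of dimension d is modelled
   (up to isomorphism) as R^d (row vectors 'rV_d) together with the matrix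
   A of the generator g of Z/3, acting by v |-> v *m A, with A^3 = 1.
   The group element g^k acts by A ^+ k, k = 0, 1, 2. *)
Definition is_Z3_rep (R : realType) (d : nat) (A : 'M[R]_d) : Prop :=
  A ^+ 3 = 1.

Definition has_inv_basis_up_to_sign (R : realType) (d : nat) (A : 'M[R]_d)
  : Prop :=
  exists B : 'M[R]_d, B \in unitmx /\
    forall (k : 'I_3) (i : 'I_d), exists (j : 'I_d) (s : bool),
      row i B *m (A ^+ k) = (-1) ^+ s *: row j B.

(* The generator of the representation n*3 = direct sum of n copies of the
   regular representation of Z/3 on R^(n*3): coordinate i = 3q + r is sent to
   coordinate 3q + (r+1 mod 3) (cyclic permutation within each block). *)
Definition nreg (R : realType) (n : nat) : 'M[R]_(n * 3) :=
  \matrix_(i < n * 3, j < n * 3)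
    ((i %/ 3 == j %/ 3)%N && (j %% 3 == (i %% 3).+1 %% 3)%N)%:R.

Definition sum_reg (R : realType) (d n : nat) (A : 'M[R]_d) : 'M[R]_(d + n * 3) :=
  block_mx A 0 0 (nreg R n).

From HB Require Import structures.
From mathcomp Require Import all_boot all_order all_algebra.
From mathcomp Require Import reals.
From mathcomp Require Import fingroup perm zify ring lra.
Set Implicit Arguments. Unset Strict Implicit. Unset Printing Implicit Defensive.
Import Order.TTheory GRing.Theory Num.Theory.
Local Open Scope ring_scope.

(* Let g act by A with A^3 = 1 and put N = 1 + A + A^2.  Then R^d splits as
   the fixed space (dimension p) plus ker N, and ker N has a basis of pairs
   (w, w A): extending by a vector of ker N outside an A-stable subspace S
   always adds two dimensions, since w A = a w mod S would give
   (1 + a + a^2) w = 0 mod S, and 1 + a + a^2 > 0.  Hence ker N is q copies of the rotation plane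
   and tr A = p - q.
   In a basis invariant up to sign, tr A counts the basis vectors fixed by g
   (none is sent to its opposite, as g^3 = 1), so tr A >= 0.  Conversely if
   q <= p, then V = q 3 + (p - q) 1: for q fixed vectors f_i, the orbits of
   the f_i + w_i together with the other fixed vectors form a basis permuted
   by g.  Since 3 has trace 0, V and V + n 3 have the same trace. *)

Lemma expmx_block_diag (R : pzRingType) m n (A : 'M[R]_m) (B : 'M[R]_n) k :
  block_mx A 0 0 B ^+ k = block_mx (A ^+ k) 0 0 (B ^+ k).
Proof.
elim: k => [|k IH]; first by rewrite !expr0 -scalar_mx_block.
by rewrite !exprS -!mulmxE IH mulmx_block !mulmx0 !mul0mx !addr0 !add0r.
Qed.

Section FieldMatrices.
Variable F : fieldType.

Lemma mxtrace_similar m n (A : 'M[F]_n) (M : 'M[F]_m) (C : 'M[F]_(m, n)) :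
  row_free C -> row_full C -> C *m A = M *m C -> \tr A = \tr M.
Proof.
move=> freeC /row_fullP[D DC] CAM.
have CD : C *m D = 1%:M by apply: (row_free_inj freeC); rewrite -mulmxA DC mul1mx mulmx1.
by rewrite -[A]mul1mx -DC -mulmxA CAM mulmxA mxtrace_mulC mulmxA CD mul1mx.
Qed.

Lemma mxrank_adds_row m n (S : 'M[F]_(m, n)) (v : 'rV[F]_n) :
  ~~ (v <= S)%MS -> \rank (S + v)%MS = (\rank S).+1.
Proof.
move=> vS; have [rank_le _] := mxrank_adds_leqif S v.
have : (\rank S < \rank (S + v))%N.
  by apply: rank_ltmx; rewrite ltmxE addsmxSl addsmx_sub submx_refl.
move: rank_le; rewrite rank_rV; case: (v != 0) => /=; lia.
Qed.

Lemma row_free_full_dim m n (C : 'M[F]_(m, n)) : row_free C -> row_full C -> m = n.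
Proof. by move=> /eqP freeC /eqP fullC; exact: etrans (esym freeC) fullC. Qed.

Lemma row_unitmx_neq0 n (B : 'M[F]_n) i : B \in unitmx -> row i B != 0.
Proof.
rewrite -row_free_unit => /row_free_inj Binj; apply/eqP => Bi0.
have : delta_mx 0 i *m B = (0 : 'rV_n) *m B by rewrite mul0mx -Bi0 rowE.
by move/(Binj 1)/matrixP/(_ 0 i)/eqP; rewrite !mxE !eqxx oner_eq0.
Qed.

End FieldMatrices.

Section RowsAmong.
Variable T : Type.

Definition rows_among m1 m2 n (M : 'M[T]_(m1, n)) (B : 'M[T]_(m2, n)) :=
  forall i, exists j, row i M = row j B.

Lemma rows_among_col_mx m1 m2 m n (M1 : 'M[T]_(m1, n)) (M2 : 'M[T]_(m2, n))
    (B : 'M[T]_(m, n)) :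
  rows_among (col_mx M1 M2) B <-> rows_among M1 B /\ rows_among M2 B.
Proof.
split=> [M_B | [M1_B M2_B] i].
  split=> i; [have [j] := M_B (lshift m2 i) | have [j] := M_B (rshift m1 i)].
    by rewrite rowKu; exists j.
  by rewrite rowKd; exists j.
rewrite -[i]splitK; case: (split i) => k /=.
  by have [j] := M1_B k; exists j; rewrite rowKu.
by have [j] := M2_B k; exists j; rewrite rowKd.
Qed.

Lemma rows_among_refl m n (B : 'M[T]_(m, n)) : rows_among B B.
Proof. by move=> i; exists i. Qed.

End RowsAmong.

Lemma rows_among_orbit (R : pzRingType) d (A : 'M[R]_d) q r
    (X : 'M[R]_(q, d)) (Y : 'M[R]_(r, d)) :
  A ^+ 3 = 1 -> Y *m A = Y ->
  let B := col_mx (col_mx X Y) (col_mx (X *m A) (X *m A *m A)) in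
  forall k : 'I_3, rows_among (B *m A ^+ k) B.
Proof.
move=> A3 YA B; have XA3 : X *m A *m A *m A = X.
  by rewrite -[RHS]mulmx1 idmxE -A3 !exprS expr0 mulr1 -!mulmxE !mulmxA.
have /rows_among_col_mx[/rows_among_col_mx[X_B Y_B] /rows_among_col_mx[XA_B XAA_B]] :=
  rows_among_refl B.
case=> [[|[|[|k]]] //= _]; first by rewrite expr0 mulmx1; apply: rows_among_refl.
  by rewrite expr1 !mul_col_mx YA XA3; do ?[apply/rows_among_col_mx; split].
by rewrite expr2 -mulmxE mulmxA !mul_col_mx !YA XA3; do ?[apply/rows_among_col_mx; split].
Qed.

Section CubeRootOfUnity.
Variables (R : realFieldType) (d : nat) (A : 'M[R]_d).
Hypothesis A3 : A ^+ 3 = 1.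
Local Notation N := (1 + A + A ^+ 2).

Lemma mulmx_normA : N *m A = N.
Proof. by rewrite mulmxE !mulrDl mul1r -expr2 -exprSr A3 addrC addrA. Qed.

Lemma mulmx_Anorm : A *m N = N.
Proof. by rewrite mulmxE !mulrDr mulr1 -expr2 -exprS A3 addrC addrA. Qed.

Lemma mulmx_normX k : N *m A ^+ k = N.
Proof.
elim: k => [|k IH]; first by rewrite expr0 mulmx1.
by rewrite [A ^+ k.+1]exprSr -mulmxE mulmxA IH mulmx_normA.
Qed.

Lemma mulmx_normN : N *m N = 3%:R *: N.
Proof.
rewrite !mulmxDr mulmx1 mulmx_normA mulmx_normX.
by rewrite scaler_nat !mulrS mulr0n addr0 addrA.
Qed.

Lemma kernorm_mulmxAA m (X : 'M[R]_(m, d)) :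
  X *m N = 0 -> X *m A *m A = - (X + X *m A).
Proof.
rewrite !mulmxDr mulmx1 expr2 -mulmxE mulmxA addrC => /eqP.
by rewrite addr_eq0 => /eqP.
Qed.

Lemma stablemx_kernorm_span m (X : 'M[R]_(m, d)) :
  X *m N = 0 -> stablemx (X + X *m A)%MS A.
Proof.
move=> XN; rewrite (eqmxMr A (addsmxE X (X *m A))) mul_col_mx -addsmxE.
rewrite addsmx_sub addsmxSr kernorm_mulmxAA // (eqmx_opp (X + X *m A)).
by rewrite addmx_sub ?addsmxSl ?addsmxSr.
Qed.

Lemma eigenvN1_eq0 (v : 'rV[R]_d) : v *m A = - v -> v = 0.
Proof.
move=> vA; have : v *m A ^+ 3 = - v.
  by rewrite !exprS expr0 mulr1 -!mulmxE !mulmxA !(vA, mulNmx) opprK.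
rewrite A3 mulmx1 => /eqP; rewrite -subr_eq0 opprK -mulr2n -scaler_nat.
by rewrite scaler_eq0 pnatr_eq0 => /eqP.
Qed.

Lemma kernorm_mulmxA_notin m (S : 'M[R]_(m, d)) (w : 'rV[R]_d) :
  stablemx S A -> w *m N = 0 -> ~~ (w <= S)%MS -> ~~ (w *m A <= S + w)%MS.
Proof.
move=> SA wN; apply: contra => /sub_addsmxP[[u c] /= wAE].
set a := c 0 0.
have wA_a : (w *m A - a *: w <= S)%MS.
  by rewrite wAE [c]mx11_scalar mul_scalar_mx addrK submxMl.
have wAA_a2 : (w *m A *m A - (a * a) *: w <= S)%MS.
  have -> : w *m A *m A - (a * a) *: w = (w *m A - a *: w) *m A + a *: (w *m A - a *: w).
    by rewrite mulmxBl -scalemxAl scalerBr scalerA addrA subrK.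
  by rewrite addmx_sub ?scalemx_sub // (submx_trans (submxMr A wA_a)).
have norm_a : (- ((1 + a + a * a) *: w) <= S)%MS.
  have -> : - ((1 + a + a * a) *: w) = (w *m A - a *: w) + (w *m A *m A - (a * a) *: w).
    by apply/rowP => k; rewrite (kernorm_mulmxAA wN) !mxE; ring.
  exact: addmx_sub.
have a_pos : 0 < 1 + a + a * a by nra.
rewrite (eqmx_opp ((1 + a + a * a) *: w)) in norm_a.
by rewrite -(scalerK (lt0r_neq0 a_pos) w) scalemx_sub.
Qed.

Lemma kernorm_span_extend q (X : 'M[R]_(q, d)) (w : 'rV[R]_d) :
  X *m N = 0 -> w *m N = 0 -> ~~ (w <= X + X *m A)%MS ->
  \rank (col_mx X w + col_mx X w *m A)%MS = (\rank (X + X *m A)).+2.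
Proof.
move=> XN wN wS.
have wAS := kernorm_mulmxA_notin (stablemx_kernorm_span XN) wN wS.
rewrite mul_col_mx -(adds_eqmx (addsmxE X w) (addsmxE (X *m A) (w *m A))).
rewrite -!addsmxA [(w + _)%MS]addsmxA [(w + X *m A)%MS]addsmxC !addsmxA.
by rewrite !mxrank_adds_row.
Qed.

Lemma kernorm_span_complete q (X : 'M[R]_(q, d)) :
  X *m N = 0 -> \rank (X + X *m A)%MS = (q + q)%N ->
  exists q' (W : 'M[R]_(q', d)),
    [/\ W *m N = 0, \rank (W + W *m A)%MS = (q' + q')%N & (kermx N <= W + W *m A)%MS].
Proof.
have [k] := ubnP (d - \rank (X + X *m A)%MS)%N.
elim: k q X => // k IH q X lt_k XN rankX.
have [spans|] := boolP (kermx N <= X + X *m A)%MS; first by exists q, X.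
case/row_subPn=> i wS; set w := row i (kermx N) in wS.
have wN : w *m N = 0 by apply/sub_kermxP; apply: row_sub.
have rankXw := kernorm_span_extend XN wN wS.
apply: (IH _ (col_mx X w)).
- by move: lt_k (rank_leq_col (col_mx X w + col_mx X w *m A)%MS); rewrite rankXw; lia.
- by rewrite mul_col_mx XN wN col_mx0.
by rewrite rankXw rankX addn1 addnS addSn.
Qed.

Definition fixed_rotation_basis p q (F : 'M[R]_(p, d)) (W : 'M[R]_(q, d)) :=
  [/\ F *m A = F, W *m N = 0, row_free (col_mx F (col_mx W (W *m A)))
     & row_full (col_mx F (col_mx W (W *m A)))].

Lemma fixed_rotation_basis_exists :
  exists p q (F : 'M[R]_(p, d)) (W : 'M[R]_(q, d)), fixed_rotation_basis F W.
Proof.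
have [|q [W [WN rankW kerN_W]]] := @kernorm_span_complete 0 0 (mul0mx _ _).
  by rewrite mul0mx adds0mx mxrank0.
pose F := row_base (kermx (A - 1)).
have fixed m (Z : 'M[R]_(m, d)) : (Z <= kermx (A - 1))%MS -> Z *m A = Z.
  by move/sub_kermxP; rewrite mulmxBr mulmx1 => /eqP; rewrite subr_eq0 => /eqP.
have W_kerN : (W + W *m A <= kermx N)%MS.
  by rewrite addsmx_sub; apply/andP; split; apply/sub_kermxP; rewrite -?mulmxA ?mulmx_Anorm.
have FW0 : (F :&: (W + W *m A))%MS = 0.
  apply/eqP; rewrite -submx0; set Z := (F :&: _)%MS.
  have ZA : Z *m A = Z by apply: fixed; rewrite (submx_trans (capmxSl _ _)) ?eq_row_base.
  have /sub_kermxP : (Z <= kermx N)%MS by rewrite (submx_trans (capmxSr _ _)).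
  rewrite !mulmxDr mulmx1 expr2 -mulmxE mulmxA !ZA -mulr2n -mulrSr -scaler_nat.
  by move/eqP; rewrite scaler_eq0 pnatr_eq0 submx0.
have C_eq : (col_mx F (col_mx W (W *m A)) :=: F + (W + W *m A))%MS.
  exact/eqmx_sym/(eqmx_trans (adds_eqmx (eqmx_refl F) (addsmxE W _)) (addsmxE F _)).
exists (\rank (kermx (A - 1))), q, F, W; split=> //.
- by apply: fixed; rewrite eq_row_base.
- by rewrite /row_free C_eq mxrank_disjoint_sum // rankW eq_row_base.
rewrite -sub1mx C_eq.
have N3 : (3%:R : R) != 0 by rewrite pnatr_eq0.
rewrite -(subrK (3%:R^-1 *: N) 1%:M) addrC addmx_sub_adds //.
  rewrite eq_row_base scalemx_sub //; apply/sub_kermxP.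
  by rewrite mulmxBr mulmx1 mulmx_normA subrr.
apply: submx_trans kerN_W; apply/sub_kermxP.
by rewrite mulmxBl mul1mx -scalemxAl mulmx_normN scalerA mulVf // scale1r subrr.
Qed.

Lemma fixed_rotation_basis_trace p q (F : 'M[R]_(p, d)) (W : 'M[R]_(q, d)) :
  fixed_rotation_basis F W -> \tr A = p%:R - q%:R.
Proof.
case=> FA WN freeC fullC.
pose M : 'M[R]_(p + (q + q)) := block_mx 1%:M 0 0 (block_mx 0 1%:M (-1%:M) (-1%:M)).
rewrite (mxtrace_similar (M := M) freeC fullC).
  by rewrite !mxtrace_block mxtrace0 !mxtrace1 raddfN /= mxtrace1 add0r.
rewrite /M !mul_block_col !mul_col_mx FA (kernorm_mulmxAA WN).
by rewrite !mulNmx !mul1mx !mul0mx !addr0 !add0r opprD.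
Qed.

Lemma perm_basis_of_fixed_rotation_basis p q (F : 'M[R]_(p, d)) (W : 'M[R]_(q, d)) :
  fixed_rotation_basis F W -> (q <= p)%N ->
  exists m (B : 'M[R]_(m, d)),
    [/\ row_free B, row_full B & forall k : 'I_3, rows_among (B *m A ^+ k) B].
Proof.
case=> FA WN freeC fullC le_qp.
have dim := row_free_full_dim freeC fullC.
have [r pE] : exists r, p = (q + r)%N by exists (p - q)%N; rewrite subnKC.
subst p; set F1 := usubmx F; set F2 := dsubmx F.
have F1A : F1 *m A = F1 by rewrite mul_usub_mx FA.
have F2A : F2 *m A = F2 by rewrite mul_dsub_mx FA.
set X := F1 + W; set B := col_mx (col_mx X F2) (col_mx (X *m A) (X *m A *m A)).
have := submx_refl B; rewrite {2}/B !col_mx_sub => /andP[/andP[X_B F2_B] /andP[XA_B XAA_B]].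
have F1_B : (F1 <= B)%MS.
  have F1E : 3%:R *: F1 = X + X *m A + X *m A *m A.
    rewrite /X !mulmxDl !F1A (kernorm_mulmxAA WN).
    by apply/matrixP => i j; rewrite !mxE; ring.
  have N3 : (3%:R : R) != 0 by rewrite pnatr_eq0.
  by rewrite -(scalerK N3 F1) F1E; exact/scalemx_sub/(addmx_sub (addmx_sub X_B XA_B) XAA_B).
have W_B : (W <= B)%MS by rewrite -(addKr F1 W) -/X addmx_sub // (eqmx_opp F1).
have WA_B : (W *m A <= B)%MS.
  by rewrite -(addKr F1 W) -/X mulmxDl mulNmx F1A addmx_sub // (eqmx_opp F1).
have fullB : row_full B.
  rewrite -sub1mx (submx_trans _ (_ : col_mx F (col_mx W (W *m A)) <= B))%MS ?sub1mx //.
  by rewrite -(vsubmxK F) !col_mx_sub F1_B F2_B W_B WA_B.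
exists _, B; split=> //; last exact: rows_among_orbit.
by move: fullB; rewrite /row_full /row_free => /eqP ->; rewrite -dim addnA.
Qed.

End CubeRootOfUnity.

Section InvariantBasisUpToSign.
Variables (R : realType) (d : nat) (A : 'M[R]_d).
Hypothesis A3 : A ^+ 3 = 1.

Lemma inv_basis_trace_ge0 : has_inv_basis_up_to_sign A -> 0 <= \tr A.
Proof.
case=> B [uB BA].
have -> : \tr A = \tr (B *m A *m invmx B) by rewrite mxtrace_mulC mulmxA mulVmx ?mul1mx.
apply: sumr_ge0 => i _; have [j [s]] := BA 1 i; rewrite expr1 => BiA.
have -> : (B *m A *m invmx B) i i = row i (B *m A *m invmx B) 0 i by rewrite [RHS]mxE.
rewrite !row_mul BiA -scalemxAl -row_mul.
rewrite mulmxV // !mxE; case: s BiA => [|_]; last by rewrite expr0 mul1r ler0n.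
rewrite expr1 scaleN1r; have [-> BiA|_ _] := eqVneq j i; last by rewrite mulr0n mulr0.
by have := row_unitmx_neq0 i uB; rewrite (eigenvN1_eq0 A3 BiA) eqxx.
Qed.

Lemma inv_basis_of_trace_ge0 : 0 <= \tr A -> has_inv_basis_up_to_sign A.
Proof.
have [p [q [F [W basisFW]]]] := fixed_rotation_basis_exists A3.
rewrite (fixed_rotation_basis_trace basisFW) subr_ge0 ler_nat => le_qp.
have [m [B [freeB fullB BA]]] := perm_basis_of_fixed_rotation_basis A3 basisFW le_qp.
have md := row_free_full_dim freeB fullB; subst m.
exists B; split; first by rewrite -row_full_unit.
by move=> k i; have [j BiA] := BA k i; exists j, false; rewrite scale1r -row_mul.
Qed.

Lemma inv_basis_iff_trace_ge0 : has_inv_basis_up_to_sign A <-> 0 <= \tr A.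
Proof. by split; [exact: inv_basis_trace_ge0 | exact: inv_basis_of_trace_ge0]. Qed.

End InvariantBasisUpToSign.

Section RegularRepresentation.
Variables (R : realType) (n : nat).

Lemma block_cycle_subproof (i : 'I_(n * 3)) : (3 * (i %/ 3) + (i %% 3).+1 %% 3 < n * 3)%N.
Proof. have := ltn_ord i; lia. Qed.

Definition block_cycle (i : 'I_(n * 3)) : 'I_(n * 3) := Ordinal (block_cycle_subproof i).

Lemma block_cycle3 i : block_cycle (block_cycle (block_cycle i)) = i.
Proof. by apply: val_inj => /=; lia. Qed.

Lemma block_cycle_inj : injective block_cycle.
Proof. by apply: (can_inj (g := block_cycle \o block_cycle)) => i; apply: block_cycle3. Qed.

Definition block_cycle_perm : 'S_(n * 3) := perm block_cycle_inj.

Lemma nreg_perm_mx : nreg R n = perm_mx block_cycle_perm.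
Proof.
apply/matrixP => i j; rewrite !mxE permE; congr (nat_of_bool _)%:R.
apply/idP/idP => [/andP[/eqP ij_block /eqP ij_pos] | /eqP/(congr1 val) /= ji].
  by apply/eqP/val_inj => /=; lia.
by apply/andP; split; apply/eqP; lia.
Qed.

Lemma nreg_cube : nreg R n ^+ 3 = 1.
Proof.
rewrite nreg_perm_mx !exprS expr0 mulr1 -!mulmxE -!perm_mxM.
have -> : (block_cycle_perm * (block_cycle_perm * block_cycle_perm) = 1)%g.
  by apply/permP => i; rewrite !permM !permE /= block_cycle3.
exact: perm_mx1.
Qed.

Lemma mxtrace_nreg : \tr (nreg R n) = 0.
Proof.
rewrite /mxtrace big1 // => i _; rewrite mxE.
have -> : (i %% 3 == (i %% 3).+1 %% 3)%N = false by apply/eqP; lia.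
by rewrite andbF.
Qed.

End RegularRepresentation.

Theorem corollary2p22 (R : realType) (d : nat) (A : 'M[R]_d) (n : nat) :
  is_Z3_rep A ->
  (has_inv_basis_up_to_sign A <-> has_inv_basis_up_to_sign (sum_reg n A)).
Proof.
rewrite /is_Z3_rep => A3.
have S3 : sum_reg n A ^+ 3 = 1.
  by rewrite /sum_reg expmx_block_diag A3 nreg_cube -scalar_mx_block.
have trS : \tr (sum_reg n A) = \tr A by rewrite /sum_reg mxtrace_block mxtrace_nreg addr0.
by rewrite (inv_basis_iff_trace_ge0 A3) (inv_basis_iff_trace_ge0 S3) trS.
Qed.
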